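(* Let $A\in\mathbb{R}^{m\times n}$ with $m<n$, let $B$ be a matrix whose columns form a basis of the null space of $A$, let $T\subseteq\{1,\dots,n\}$ and let $\sigma\in\{-1,+1\}^T$ be a fixed sign pattern. Then every $\mathbf{x}\in\mathbb{R}^n$ with support exactly $T$ and $\operatorname{sgn}(x_i)=\sigma_i$ for $i\in T$ is the unique solution of the $\ell_0$-minimization problem $\min\{\|\mathbf{v}\|_0 : A\mathbf{v}=A\mathbf{x}\}$ if and only if $$\|B_{T^-}\mathbf{z}\|_0<\|B_{T^c}\mathbf{z}\|_0$$ for every nonzero vector $\mathbf{z}$, where $T^-=\{i\in T:(B\mathbf{z})_i\sigma_i<0\}$.
   Context: $\|\mathbf{v}\|_0=|\{i:v_i\neq0\}|$. For an index set $S$, $B_S$ is the submatrix of $B$ formed by rows indexed by $S$; $T^c=\{1,\dots,n\}\setminus T$. *)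

From HB Require Import structures.
From mathcomp Require Import all_boot all_order all_algebra.
Set Implicit Arguments. Unset Strict Implicit. Unset Printing Implicit Defensive.
Import Order.TTheory GRing.Theory Num.Theory.
Local Open Scope ring_scope.

Definition norm0 (R : nzRingType) (n : nat) (v : 'cV[R]_n) : nat :=
  #|[set i | v i ord0 != 0]|.

(* ||v_S||_0 : the l0 "norm" of the subvector of v indexed by S
   (so ||B_S z||_0 = norm0_on S (B *m z)). *)
Definition norm0_on (R : nzRingType) (n : nat) (S : {set 'I_n}) (v : 'cV[R]_n) : nat :=
  #|[set i in S | v i ord0 != 0]|.

Definition unique_l0_solution (R : nzRingType) (m n : nat)
    (A : 'M[R]_(m, n)) (x : 'cV[R]_n) : Prop :=
  forall v : 'cV[R]_n, A *m v = A *m x -> v != x -> (norm0 x < norm0 v)%N.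

Definition null_space_basis (R : nzRingType) (m n k : nat)
    (A : 'M[R]_(m, n)) (B : 'M[R]_(n, k)) : Prop :=
  [/\ A *m B = 0,
      (forall v : 'cV[R]_n, A *m v = 0 -> exists z : 'cV[R]_k, v = B *m z)
    & (forall z : 'cV[R]_k, B *m z = 0 -> z = 0)].

(* A competitor of x is v = x + w with w = B z.  Off T, v agrees with w; on T,
   v_i can only vanish where w_i has the sign opposite to sigma_i, so
   ||v||_0 >= |T \ T^-| + ||w_{T^c}||_0, with equality for the admissible x
   equal to -w on T^- and to sigma on the rest of T.  Comparing with
   ||x||_0 = |T| = |T^-| + |T \ T^-| gives the criterion |T^-| < ||w_{T^c}||_0,
   and |T^-| = ||w_{T^-}||_0 because w does not vanish on T^-. *)

From HB Require Import structures.
From mathcomp Require Import all_boot all_order all_algebra.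
Set Implicit Arguments. Unset Strict Implicit. Unset Printing Implicit Defensive.
Import Order.TTheory GRing.Theory Num.Theory.
Local Open Scope ring_scope.

Lemma norm0_split (R : nzRingType) n (S : {set 'I_n}) (u : 'cV[R]_n) :
  norm0 u = (norm0_on S u + norm0_on (~: S) u)%N.
Proof.
rewrite /norm0 /norm0_on -(cardsID S [set i | u i ord0 != 0]).
by congr (_ + _)%N; apply: eq_card => i; rewrite !inE andbC.
Qed.

Lemma eq_norm0_on (R : nzRingType) n (S : {set 'I_n}) (u v : 'cV[R]_n) :
  {in S, forall i, u i ord0 = v i ord0} -> norm0_on S u = norm0_on S v.
Proof.
move=> eq_uv; apply: eq_card => i; rewrite !inE.
by case: (boolP (i \in S)) => //= /eq_uv ->.
Qed.

Lemma mul_sgr_gt0 (R : realDomainType) (x : R) : (0 < x * Num.sg x) = (x != 0).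
Proof. by rewrite mulrC -normrEsg normr_gt0. Qed.

Lemma sgrN_mul_lt0 (R : realDomainType) (w s : R) :
  s = 1 \/ s = -1 -> w * s < 0 -> Num.sg (- w) = s.
Proof.
move=> [->|->]; rewrite ?mulr1 ?mulrN1 => w_s.
- by apply/eqP; rewrite (sgr_cp0 _).1.1 oppr_gt0.
- by apply/eqP; rewrite (sgr_cp0 _).1.2.
Qed.

Section SignPattern.

Variables (R : realDomainType) (n : nat).
Variables (T : {set 'I_n}) (sigma : 'I_n -> R).

Definition sign_mismatch (w : 'cV[R]_n) : {set 'I_n} :=
  [set i in T | w i ord0 * sigma i < 0].

Lemma sign_mismatch_sub w : sign_mismatch w \subset T.
Proof. by apply/subsetP => i; rewrite inE => /andP[]. Qed.

Lemma card_sign_mismatchID w :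
  #|T| = (#|sign_mismatch w| + #|T :\: sign_mismatch w|)%N.
Proof. by rewrite -(cardsID (sign_mismatch w) T) (setIidPr (sign_mismatch_sub w)). Qed.

Lemma norm0_on_sign_mismatch w :
  norm0_on (sign_mismatch w) w = #|sign_mismatch w|.
Proof.
apply: eq_card => i; rewrite !inE.
by case: (w i ord0 =P 0) => [->|]; rewrite ?mul0r ?ltxx ?andbF ?andbT.
Qed.

Lemma norm0_addr_ge (x w : 'cV[R]_n) :
  [set i | x i ord0 != 0] = T ->
  (forall i, i \in T -> Num.sg (x i ord0) = sigma i) ->
  (#|T :\: sign_mismatch w| + norm0_on (~: T) w <= norm0 (x + w))%N.
Proof.
move=> supp_x sg_x; rewrite (norm0_split T) leq_add //.
  apply/subset_leq_card/subsetP => i; rewrite !inE.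
  case/andP=> + iT; rewrite iT /= -leNgt => w_s; rewrite mxE.
  have x_s : 0 < x i ord0 * sigma i.
    by rewrite -sg_x // mul_sgr_gt0 -(in_set (fun j => x j ord0 != 0)) supp_x.
  apply: contraTneq (ltr_wpDr w_s x_s) => x_w0.
  by rewrite -mulrDl x_w0 mul0r ltxx.
rewrite (eq_norm0_on (v := w)) // => i; rewrite inE -supp_x inE negbK => /eqP x0.
by rewrite mxE x0 add0r.
Qed.

Hypothesis sigma_sign : forall i, i \in T -> sigma i = 1 \/ sigma i = -1.

Lemma exists_norm0_addr_le (w : 'cV[R]_n) :
  exists x : 'cV[R]_n,
    [/\ [set i | x i ord0 != 0] = T,
        forall i, i \in T -> Num.sg (x i ord0) = sigma i
      & (norm0 (x + w) <= #|T :\: sign_mismatch w| + norm0_on (~: T) w)%N].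
Proof.
pose x : 'cV[R]_n := \col_i (if i \in sign_mismatch w then - w i ord0
                             else if i \in T then sigma i else 0).
have sg_x i : i \in T -> Num.sg (x i ord0) = sigma i.
  move=> iT; rewrite mxE; case: ifPn => [|_]; last first.
    by rewrite iT; case: (sigma_sign iT) => ->; rewrite ?sgr1 ?sgrN1.
  by rewrite inE iT => /sgrN_mul_lt0; apply; apply: sigma_sign.
have supp_x : [set i | x i ord0 != 0] = T.
  apply/setP => i; rewrite inE; case: (boolP (i \in T)) => [iT|iT].
    rewrite -sgr_eq0 sg_x //.
    by case: (sigma_sign iT) => ->; rewrite ?oppr_eq0 oner_eq0.
  by rewrite mxE inE (negbTE iT) eqxx.
exists x; split=> //; rewrite (norm0_split T) leq_add //.
  apply/subset_leq_card/subsetP => i; rewrite !inE !mxE.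
  case/andP=> iT; rewrite iT andbT; case: ifPn => [|+ _]; first by rewrite addNr eqxx.
  by rewrite inE iT.
rewrite (eq_norm0_on (v := w)) // => i; rewrite inE => iT.
have /negbTE iTm : i \notin sign_mismatch w.
  by apply: contra iT; apply/subsetP/sign_mismatch_sub.
by rewrite !mxE iTm (negbTE iT) add0r.
Qed.

End SignPattern.

Theorem theorem4 (R : realFieldType) (m n k : nat)
    (A : 'M[R]_(m, n)) (B : 'M[R]_(n, k))
    (T : {set 'I_n}) (sigma : 'I_n -> R) :
  (m < n)%N ->
  null_space_basis A B ->
  (forall i, i \in T -> sigma i = 1 \/ sigma i = -1) ->
  (forall x : 'cV[R]_n,
      [set i | x i ord0 != 0] = T ->
      (forall i, i \in T -> Num.sg (x i ord0) = sigma i) ->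
      unique_l0_solution A x)
  <->
  (forall z : 'cV[R]_k, z != 0 ->
      (norm0_on [set i in T | ((B *m z) i ord0 * sigma i < 0)%R] (B *m z)
       < norm0_on (~: T) (B *m z))%N).
Proof.
move=> _ [AB0 kerA Binj] sigma_sign; split.
- move=> uniq_x z z_neq0; rewrite -/(sign_mismatch T sigma _) norm0_on_sign_mismatch.
  set w := B *m z.
  have [x [supp_x sg_x x_le]] := exists_norm0_addr_le sigma_sign w.
  have Axw : A *m (x + w) = A *m x by rewrite mulmxDr mulmxA AB0 mul0mx addr0.
  have xw_neq_x : x + w != x.
    apply: contra z_neq0 => /eqP/(congr1 (fun y => y - x)).
    by rewrite addrC addKr subrr => /Binj ->.
  have := leq_trans (uniq_x x supp_x sg_x _ Axw xw_neq_x) x_le.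
  have -> : norm0 x = #|T| by rewrite /norm0 supp_x.
  by rewrite (card_sign_mismatchID T sigma w) addnC ltn_add2l.
- move=> Hz x supp_x sg_x v Av v_neq_x.
  have [z vxE] : exists z, v - x = B *m z by apply: kerA; rewrite mulmxBr Av subrr.
  have z_neq0 : z != 0.
    by apply: contra v_neq_x => /eqP z0; rewrite -subr_eq0 vxE z0 mulmx0.
  have := Hz z z_neq0; rewrite -/(sign_mismatch T sigma _) norm0_on_sign_mismatch -vxE.
  set w := v - x => lt_w.
  have -> : v = x + w by rewrite addrC subrK.
  have -> : norm0 x = #|T| by rewrite /norm0 supp_x.
  rewrite (card_sign_mismatchID T sigma w).
  by apply: leq_trans (norm0_addr_ge w supp_x sg_x); rewrite addnC ltn_add2l.
Qed.
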